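(* Let $G$ be a finite graph, let $t\ge 0$ be an integer, and let $H$ be a nonempty $t$-minor of $G$. Then $$\frac{\beta(H)}{\alpha(H)}\le \hat\beta_t(G),$$ where $\alpha(H)$ is the size of a largest independent set in $H$.
   Context: All graphs are finite and simple. For an integer $t\ge 0$, a graph $H$ is a $t$-shallow minor ($t$-minor) of a graph $G$ if there are pairwise disjoint sets $V_v\subseteq V(G)$, $v\in V(H)$, each inducing a connected subgraph of $G$ of radius at most $t$, such that $uv\in E(H)$ if and only if some edge of $G$ joins $V_u$ and $V_v$. For a graph $H$, $\beta(H)$ is the minimum number of cliques partitioning $V(H)$; for $x\in V(H)$, $H_x$ is the subgraph induced by the closed neighborhood $N_H[x]$; $\tilde\beta(H)=\min_{x\in V(H)}\beta(H_x)$; and $\hat\beta_t(G)=\max\{\tilde\beta(H): H \text{ a nonempty } t\text{-minor of } G\}$. *)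

(* A simple graph is a finType T with an edge relation e : rel T
   assumed symmetric and irreflexive (hypotheses carried in the theorem). *)
From HB Require Import structures.
From mathcomp Require Import all_boot all_order all_algebra.
From Stdlib Require Import ClassicalEpsilon.
Set Implicit Arguments. Unset Strict Implicit. Unset Printing Implicit Defensive.

Section Graphs.
Variable U : finType.
Variable f : rel U.

Definition independent (S : {set U}) : bool :=
  [forall x in S, forall y in S, ~~ f x y].
Definition clique (S : {set U}) : bool :=
  [forall x in S, forall y in S, (x != y) ==> f x y].

Definition alpha : nat := \max_(S : {set U} | independent S) #|S|.

(* minimum number of cliques partitioning the vertex set S (induced subgraph H[S]);
   the default value #|S| is attained by the partition into singletons *)
Definition beta_on (S : {set U}) : nat :=
  \big[minn/#|S|]_(P : {set {set U}} | partition P S && [forall B in P, clique B]) #|P|.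

Definition beta : nat := beta_on [set: U].

Definition cnbhd (x : U) : {set U} := [set y | (y == x) || f x y].

Definition tbeta : nat := \big[minn/#|U|]_(x : U) beta_on (cnbhd x).
End Graphs.

Definition simple_graph (T : finType) (e : rel T) : Prop :=
  symmetric e /\ irreflexive e.

(* G[S] is connected of radius at most t: some centre c in S reaches every
   vertex of S by a path of length <= t inside G[S] *)
Definition radius_le (T : finType) (e : rel T) (S : {set T}) (t : nat) : Prop :=
  exists2 c, c \in S &
    forall x, x \in S -> exists p : seq T,
      [/\ path (fun a b => e a b && (b \in S)) c p, last c p = x & size p <= t].

Definition shallow_minor (t : nat) (T : finType) (e : rel T) (U : finType) (f : rel U) : Prop :=
  exists V : U -> {set T},
    [/\ forall u v, u != v -> [disjoint V u & V v],
        forall u, radius_le e (V u) t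
      & forall u v, u != v ->
          (f u v <-> exists x y, [/\ x \in V u, y \in V v & e x y])].

Definition is_hat_beta (t : nat) (T : finType) (e : rel T) (k : nat) : Prop :=
  (exists (U : finType) (f : rel U),
      [/\ simple_graph f, shallow_minor t e f, 0 < #|U| & tbeta f = k]) /\
  (forall (U : finType) (f : rel U),
      simple_graph f -> shallow_minor t e f -> 0 < #|U| -> tbeta f <= k).

Definition hat_beta (t : nat) (T : finType) (e : rel T) : nat :=
  epsilon (inhabits 0%N) (is_hat_beta t e).

From HB Require Import structures.
From mathcomp Require Import all_boot all_order all_algebra.
From Stdlib Require Import ClassicalEpsilon.
Import Order.TTheory GRing.Theory Num.Theory.
Set Implicit Arguments. Unset Strict Implicit. Unset Printing Implicit Defensive.

(* In a nonempty induced subgraph H[S] pick a vertex x whose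
   closed neighbourhood has the smallest clique cover number; as H[S] is again
   a t-minor of G, that number is at most hat_beta.  Cover N[x] by these
   cliques, put x into an independent set and recurse on S \ N[x]: every
   round spends at most hat_beta cliques and adds one vertex to an independent
   set, so beta(H) <= hat_beta * alpha(H). *)

Lemma card_partition_le (T : finType) (P : {set {set T}}) (D : {set T}) :
  partition P D -> #|P| <= #|D|.
Proof.
move=> PD; rewrite (card_partition PD) -sum1_card.
by apply: leq_sum => A AP; rewrite card_gt0 (partition_neq0 PD AP).
Qed.

Lemma bigminn_le_cond (I : finType) (P : pred I) (F : I -> nat) d i :
  P i -> \big[minn/d]_(j | P j) F j <= F i.
Proof. exact: (@bigmin_le_cond _ nat I d i P F). Qed.

Section CliqueCoverIndependence.
Variables (U : finType) (f : rel U).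

Lemma beta_on_le (S : {set U}) (P : {set {set U}}) :
  partition P S -> [forall B in P, clique f B] -> beta_on f S <= #|P|.
Proof. by move=> PS cliqueP; apply: bigminn_le_cond; rewrite PS cliqueP. Qed.

Lemma beta_on_le_card (S : {set U}) : beta_on f S <= #|S|.
Proof. exact: (@bigmin_le_id _ nat). Qed.

Lemma singleton_partition_clique (S : {set U}) :
  [forall B in preim_partition id S, clique f B].
Proof.
apply/forall_inP => B /imsetP[x _ ->]; apply/forall_inP => y.
rewrite inE => /andP[_ /eqP <-]; apply/forall_inP => z.
by rewrite inE => /andP[_ /eqP <-]; rewrite eqxx.
Qed.

Lemma beta_on_attained (S : {set U}) :
  exists P : {set {set U}},
    [/\ partition P S, [forall B in P, clique f B] & beta_on f S = #|P|].
Proof.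
pose clique_partition P := partition P S && [forall B in P, clique f B].
have singletons : clique_partition (preim_partition id S).
  by rewrite /clique_partition preim_partitionP singleton_partition_clique.
have card_le P : clique_partition P -> #|P| <= #|S|.
  by case/andP => PS _; apply: card_partition_le PS.
have [P /andP[PS cliqueP] betaE] :=
  @eq_bigmin _ nat _ #|S| _ clique_partition (fun P => #|P|) singletons card_le.
by exists P.
Qed.

Lemma beta_on_setU (A B : {set U}) : [disjoint A & B] ->
  beta_on f (A :|: B) <= beta_on f A + beta_on f B.
Proof.
move=> AB; have [PA [PAA cliqueA ->]] := beta_on_attained A.
have [PB [PBB cliqueB ->]] := beta_on_attained B.
apply: leq_trans (leq_card_setU PA PB); apply: beta_on_le.
- apply/and3P; split.
  + rewrite /cover bigcup_setU -/(cover PA) -/(cover PB).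
    by rewrite (cover_partition PAA) (cover_partition PBB).
  + apply: trivIsetU (partition_trivIset PAA) (partition_trivIset PBB) _.
    by rewrite (cover_partition PAA) (cover_partition PBB).
  + by rewrite inE (partition0 PAA) (partition0 PBB).
- by apply/forall_inP => C; rewrite inE => /orP[];
    [apply: (forall_inP cliqueA) | apply: (forall_inP cliqueB)].
Qed.

Definition alpha_on (S : {set U}) : nat :=
  \max_(I : {set U} | independent f I && (I \subset S)) #|I|.

Lemma alpha_on_setT : alpha_on [set: U] = alpha f.
Proof. by apply: eq_bigl => I; rewrite subsetT andbT. Qed.

Lemma alpha_on_attained (S : {set U}) :
  exists I, [/\ independent f I, I \subset S & alpha_on S = #|I|].
Proof.
have [I /andP[indI IS] ->] :
  {I | independent f I && (I \subset S) & alpha_on S = #|I|}.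
  apply: eq_bigmax_cond; apply/card_gt0P; exists set0.
  by rewrite unfold_in sub0set andbT; apply/forall_inP => x; rewrite inE.
by exists I.
Qed.

Hypotheses (f_sym : symmetric f) (f_irr : irreflexive f).

Lemma alpha_on_setD_cnbhd (S : {set U}) x : x \in S ->
  (alpha_on (S :\: cnbhd f x)).+1 <= alpha_on S.
Proof.
move=> xS; have [I [indI IS ->]] := alpha_on_attained (S :\: cnbhd f x).
have x_nadjI w : w \in I -> ~~ f x w.
  by move=> /(subsetP IS); rewrite !inE negb_or => /andP[/andP[_ ->]].
have xI : x \notin I by apply/negP => /(subsetP IS); rewrite !inE eqxx.
have -> : #|I|.+1 = #|x |: I| by rewrite cardsU1 xI.
apply: leq_bigmax_cond.
rewrite subUset sub1set xS (subset_trans IS (subsetDl _ _)) !andbT.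
apply/forall_inP => y /setU1P yI; apply/forall_inP => z /setU1P zI.
case: yI zI => [->|yI] [->|zI]; rewrite ?f_irr ?x_nadjI //.
- by rewrite f_sym x_nadjI.
- exact: (forall_inP (forall_inP indI y yI) z zI).
Qed.

Lemma beta_on_le_mul_alpha_on k :
  (forall S : {set U}, S != set0 ->
     exists2 x, x \in S & beta_on f (S :&: cnbhd f x) <= k) ->
  forall S : {set U}, beta_on f S <= k * alpha_on S.
Proof.
move=> small_nbhd S; have [n] := ubnP #|S|; elim: n S => // n IH S ltSn.
have [->|S0] := eqVneq S set0.
  by rewrite (leq_trans (beta_on_le_card _)) ?cards0.
have [x xS nbhd_le] := small_nbhd S S0.
have ltS'n : #|S :\: cnbhd f x| < n.
  rewrite -ltnS (leq_trans _ ltSn) // ltnS.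
  apply/proper_card/properP; split; first exact: subsetDl.
  by exists x; rewrite ?inE ?eqxx.
have disj : [disjoint S :&: cnbhd f x & S :\: cnbhd f x].
  rewrite disjoints_subset; apply/subsetP => y /setIP[_ yN].
  by rewrite in_setC in_setD yN.
rewrite -{1}(setID S (cnbhd f x)).
apply: leq_trans (beta_on_setU disj) _.
apply: leq_trans (leq_add nbhd_le (IH _ ltS'n)) _.
by rewrite -mulnS leq_mul2l alpha_on_setD_cnbhd ?orbT.
Qed.

End CliqueCoverIndependence.

Section InducedSubgraph.
Variables (U : finType) (f : rel U) (S : {set U}).

Definition induced : rel {x : U | x \in S} := fun a b => f (val a) (val b).

Lemma induced_simple : simple_graph f -> simple_graph induced.
Proof. by case=> f_sym f_irr; split=> [a b|a]; rewrite /induced ?f_irr // f_sym. Qed.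

Lemma shallow_minor_induced t (T : finType) (e : rel T) :
  shallow_minor t e f -> shallow_minor t e induced.
Proof.
case=> V [disjV radV adjV]; exists (fun a => V (val a)).
by split=> [a b|a|a b] => [ab|//|ab]; [apply: disjV|apply: adjV];
  rewrite (inj_eq val_inj).
Qed.

Lemma beta_on_cnbhd_induced (x : {x : U | x \in S}) :
  beta_on f (S :&: cnbhd f (val x)) <= beta_on induced (cnbhd induced x).
Proof.
have [P [PN cliqueP ->]] := beta_on_attained induced (cnbhd induced x).
rewrite -(card_imset _ (imset_inj val_inj)); apply: beta_on_le.
- suff -> : S :&: cnbhd f (val x) = val @: cnbhd induced x.
    by rewrite imset_partition //; apply: val_inj.
  apply/setP => y; apply/idP/imsetP => [|[z zN ->]].
    by rewrite !inE => /andP[yS yN]; exists (exist _ y yS); rewrite ?inE.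
  by rewrite !inE (valP z); rewrite inE in zN.
- apply/forall_inP => _ /imsetP[B BP ->].
  apply/forall_inP => _ /imsetP[a aB ->]; apply/forall_inP => _ /imsetP[b bB ->].
  have cliqueB := forall_inP cliqueP B BP.
  by rewrite (inj_eq val_inj); apply: (forall_inP (forall_inP cliqueB a aB) b bB).
Qed.

End InducedSubgraph.

Arguments induced {U} f S.

Lemma tbeta_attained (U : finType) (f : rel U) : 0 < #|U| ->
  exists x, tbeta f = beta_on f (cnbhd f x).
Proof.
case/card_gt0P => x0 _.
have card_le x : beta_on f (cnbhd f x) <= #|U|.
  exact: leq_trans (beta_on_le_card _ _) (max_card _).
have [x _ tbetaE] :=
  @eq_bigmin _ nat _ #|U| x0 xpredT (fun x => beta_on f (cnbhd f x)) isT
    (fun x _ => card_le x).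
by exists x.
Qed.

Lemma card_shallow_minor t (T : finType) (e : rel T) (U : finType) (f : rel U) :
  shallow_minor t e f -> #|U| <= #|T|.
Proof.
case=> V [disjV radV _]; have [->//|/card_gt0P[u0 _]] := posnP #|U|.
have [c0 _ _] := radV u0.
have pickV u : exists2 y, y \in V u & [pick y in V u] = Some y.
  by have [c cV _] := radV u; case: pickP => [y|/(_ c)]; [exists y|rewrite cV].
apply: (leq_card (fun u => odflt c0 [pick y in V u])) => u v /=.
have [y yu ->] := pickV u; have [z zv ->] := pickV v => /= eq_yz.
apply/eqP; apply: contraT => uv.
by move: zv; rewrite -eq_yz (disjointFr (disjV u v uv) yu).
Qed.

Lemma exists_max_nat (P : nat -> Prop) m :
  (exists n, P n) -> (forall n, P n -> n <= m) ->
  exists k, P k /\ forall n, P n -> n <= k.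
Proof.
pose Pb n : bool := excluded_middle_informative (P n).
have PbP n : reflect (P n) (Pb n).
  by rewrite /Pb; case: excluded_middle_informative => ?; constructor.
move=> [n0 Pn0] le_m; have [|n /PbP/le_m //|k /PbP Pk k_max] := @ex_maxnP Pb m.
  by exists n0; apply/PbP.
by exists k; split=> // n /PbP/k_max.
Qed.

Lemma tbeta_le_card (U : finType) (f : rel U) : tbeta f <= #|U|.
Proof. exact: (@bigmin_le_id _ nat). Qed.

Lemma tbeta_le_hat_beta t (T : finType) (e : rel T) (U : finType) (f : rel U) :
  simple_graph f -> shallow_minor t e f -> 0 < #|U| -> tbeta f <= hat_beta t e.
Proof.
move=> simple_f minor_f U_gt0.
(* [hat_beta] is an epsilon choice, so the maximum it names must be shown to exist. *)
suff [_ hat_beta_max] : is_hat_beta t e (hat_beta t e) by apply: hat_beta_max.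
apply: epsilon_spec.
have [|n [U' [f' [_ minor' _ <-]]]|k [[U' [f' k_val]] k_max]] :=
  @exists_max_nat (fun n => exists (U' : finType) (f' : rel U'),
    [/\ simple_graph f', shallow_minor t e f', 0 < #|U'| & tbeta f' = n]) #|T|.
- by exists (tbeta f), U, f.
- exact: leq_trans (tbeta_le_card f') (card_shallow_minor minor').
- by exists k; split=> [|U'' f'' *]; [exists U', f' | apply: k_max; exists U'', f''].
Qed.

Lemma exists_small_cnbhd t (T : finType) (e : rel T) (U : finType) (f : rel U)
    (S : {set U}) :
  simple_graph f -> shallow_minor t e f -> S != set0 ->
  exists2 x, x \in S & beta_on f (S :&: cnbhd f x) <= hat_beta t e.
Proof.
move=> simple_f minor_f /set0Pn[x0 x0S].
have S_gt0 : 0 < #|{: {x : U | x \in S}}|.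
  by apply/card_gt0P; exists (exist _ x0 x0S).
have [x tbetaE] := @tbeta_attained _ (induced f S) S_gt0.
exists (val x); first exact: valP.
apply: leq_trans (beta_on_cnbhd_induced f x) _; rewrite -tbetaE.
apply: tbeta_le_hat_beta S_gt0; first exact: induced_simple.
exact: shallow_minor_induced.
Qed.

Lemma alpha_gt0 (U : finType) (f : rel U) : irreflexive f -> 0 < #|U| -> 0 < alpha f.
Proof.
move=> f_irr /card_gt0P[x _]; rewrite -(cards1 x).
apply: (leq_bigmax_cond (F := fun S : {set U} => #|S|)).
by apply/forall_inP => y /set1P ->; apply/forall_inP => z /set1P ->; rewrite f_irr.
Qed.

Theorem theorem2p3 (T : finType) (e : rel T) (t : nat)
    (U : finType) (f : rel U) :
  simple_graph e -> simple_graph f -> shallow_minor t e f -> (0 < #|U|)%N ->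
  ((beta f)%:R / (alpha f)%:R <= (hat_beta t e)%:R :> rat)%R.
Proof.
move=> _ simple_f minor_f U_gt0; have [f_sym f_irr] := simple_f.
have beta_le : beta f <= hat_beta t e * alpha f.
  rewrite -alpha_on_setT; apply: beta_on_le_mul_alpha_on => // S S0.
  exact: exists_small_cnbhd.
by rewrite ler_pdivrMr ?ltr0n ?alpha_gt0 // -natrM ler_nat.
Qed.
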